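(* Let $\mathbf A$ be regular of bandwidth $(p,q)$, $\sigma=d\tau-\dim\ker\mathbf A$, and let $L\le R$ be finite integers with $N=R-L+1\ge 2\sigma+\tau$. Then $$\mathcal M_{L,R}=\mathbf P_{L,R}\ker\mathbf A\oplus\mathcal F_L^-\oplus\mathcal F_R^+ .$$
   Context: Fix $d\ge1$. $\mathcal V^S_d$: doubly infinite sequences $\Psi=\{\psi_j\}_{j\in\mathbb Z}$, $\psi_j\in\mathbb C^d$. A matrix Laurent polynomial of bandwidth $(p,q)$ is $\sum_{r=p}^qa_rw^r$, integers $p\le q$, $a_r$ complex $d\times d$, $a_p\ne0\ne a_q$; its BBL transformation is $(\mathbf A\Psi)_j=\sum_ra_r\psi_{j+r}$; $\mathbf T$ is the left shift $(\mathbf T\Psi)_j=\psi_{j+1}$, $\mathbf T^{-1}$ the right shift. $\mathbf A$ is regular if $\det(w^{-p}A(w,w^{-1}))$ is not the zero polynomial (then $\ker\mathbf A$ is finite-dimensional). $p'=\min(p,0)$, $q'=\max(0,q)$, $\tau=q'-p'$. For $-\infty\le L\le R\le\infty$: $\mathcal V_{L,R}$ = sequences with $\psi_j=0$ for $j\notin[L,R]$; $\mathbf P_{L,R}$ = projection onto $\mathcal V_{L,R}$ zeroing entries outside $[L,R]$; bulk solution space $\mathcal M_{L,R}=\ker(\mathbf P_{L-p',R-q'}\mathbf A|_{\mathcal V_{L,R}})$ (infinite endpoints stay infinite). Define $\mathcal F_L^-=\{\Psi\in\mathcal M_{L,\infty}: (\mathbf P_{L,\infty}\mathbf T)^k\Psi=0\text{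 for some }k\ge1\}$ and $\mathcal F_R^+=\{\Psi\in\mathcal M_{-\infty,R}: (\mathbf P_{-\infty,R}\mathbf T^{-1})^k\Psi=0\text{ for some }k\ge1\}$; these are finitely supported sequences, regarded as elements of $\mathcal V_{L,R}$. *)

From HB Require Import structures.
From mathcomp Require Import all_boot all_order all_algebra.
Set Implicit Arguments. Unset Strict Implicit. Unset Printing Implicit Defensive.
Import Order.TTheory GRing.Theory Num.Theory.
Local Open Scope ring_scope.

Section BBL.
Variables (F : numClosedFieldType) (d : nat).

Definition dseq := int -> 'cV[F]_d.

Definition bw (p q : int) : nat := `|q - p|%N.

Definition bbl (a : int -> 'M[F]_d) (p q : int) (psi : dseq) : dseq :=
  fun j => \sum_(i < (bw p q).+1) a (p + i%:Z) *m psi (j + (p + i%:Z)).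

(* w^{-p} A(w, w^{-1}) as a matrix polynomial *)
Definition symb_poly (a : int -> 'M[F]_d) (p q : int) : 'M[{poly F}]_d :=
  \matrix_(i, k) \sum_(r < (bw p q).+1) (a (p + r%:Z) i k)%:P * 'X^r.

Definition regular (a : int -> 'M[F]_d) (p q : int) : Prop :=
  \det (symb_poly a p q) != 0.

Definition shiftL (psi : dseq) : dseq := fun j => psi (j + 1).
Definition shiftR (psi : dseq) : dseq := fun j => psi (j - 1).

Definition Pfin (L R : int) (psi : dseq) : dseq :=
  fun j => if (L <= j) && (j <= R) then psi j else 0.
Definition Pge (L : int) (psi : dseq) : dseq :=
  fun j => if L <= j then psi j else 0.
Definition Ple (R : int) (psi : dseq) : dseq :=
  fun j => if j <= R then psi j else 0.

Definition pp (p : int) : int := Num.min p 0.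
Definition qq (q : int) : int := Num.max 0 q.
Definition tau (p q : int) : int := qq q - pp p.

Definition kerA a p q (psi : dseq) : Prop := forall j, bbl a p q psi j = 0.

Definition Mfin a p q (L R : int) (psi : dseq) : Prop :=
  Pfin L R psi = psi /\ Pfin (L - pp p) (R - qq q) (bbl a p q psi) = (fun _ => 0).
Definition Mge a p q (L : int) (psi : dseq) : Prop :=
  Pge L psi = psi /\ Pge (L - pp p) (bbl a p q psi) = (fun _ => 0).
Definition Mle a p q (R : int) (psi : dseq) : Prop :=
  Ple R psi = psi /\ Ple (R - qq q) (bbl a p q psi) = (fun _ => 0).

Definition FLminus a p q (L : int) (psi : dseq) : Prop :=
  Mge a p q L psi /\
  exists k : nat, (0 < k)%N /\ iter k (fun f => Pge L (shiftL f)) psi = (fun _ => 0).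
Definition FRplus a p q (R : int) (psi : dseq) : Prop :=
  Mle a p q R psi /\
  exists k : nat, (0 < k)%N /\ iter k (fun f => Ple R (shiftR f)) psi = (fun _ => 0).

Definition PkerA a p q (L R : int) (psi : dseq) : Prop :=
  exists phi, kerA a p q phi /\ psi = Pfin L R phi.

Definition has_dim (S : dseq -> Prop) (n : nat) : Prop :=
  exists b : 'I_n -> dseq,
    (forall i, S (b i)) /\
    (forall c : 'I_n -> F, (forall j, \sum_(i < n) c i *: b i j = 0) -> forall i, c i = 0) /\
    (forall psi, S psi -> exists c : 'I_n -> F, forall j, psi j = \sum_(i < n) c i *: b i j).

Definition direct_sum3 (M U V W : dseq -> Prop) : Prop :=
  (forall psi, M psi <-> exists u v w, [/\ U u, V v, W w & psi = (fun j => u j + v j + w j)]) /\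
  (forall u v w, U u -> V v -> W w -> (fun j => u j + v j + w j) = (fun _ => 0) ->
     [/\ u = (fun _ => 0), v = (fun _ => 0) & w = (fun _ => 0)]).

End BBL.

From Pilot Require Import Defs.
From HB Require Import structures.
From mathcomp Require Import all_boot all_order all_algebra.
From mathcomp Require Import zify ring.
From Stdlib Require Import FunctionalExtensionality Classical IndefiniteDescription.
Set Implicit Arguments. Unset Strict Implicit. Unset Printing Implicit Defensive.
Import Order.TTheory GRing.Theory Num.Theory.
Local Open Scope ring_scope.

(* Write t = tau.  Regularity of the symbol makes the bulk equations on a window of length
   n >= t linearly independent, so the bulk solution space of such a window has dimension d t.
   A kernel element vanishing at t consecutive sites vanishes identically, since otherwise
   its shifts would give k + 1 independent kernel elements.  Hence an element of F_L^-
   (resp. F_R^+), its shifts and P ker A form a triangular family of bulk solutions, which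
   confines its support to [L, L + sigma) (resp. (R - sigma, R]); when N >= 2 sigma + t the
   t sites in between force the three summands to be independent.  For spanning, take m so
   large that the restrictions to [L, R] of solutions on [L - m, R + m] form the stable
   image, which lies in P ker A by a Mittag-Leffler argument.  Solutions on [L - m, R + m]
   vanishing on [L, R] split into a left and a right half which, shifted back by m, lie in
   F_L^- and F_R^+; counting dimensions gives dim P ker A + dim (F_L^- + F_R^+) >= d t. *)

Lemma mul_rV_lin1E (R : comNzRingType) m n (f : 'rV[R]_m -> 'rV[R]_n) :
  linear f -> forall u, u *m lin1_mx f = f u.
Proof.
move=> hf u.
exact: (mul_rV_lin1 (HB.pack f (GRing.isLinear.Build _ _ _ _ f hf))).
Qed.

Lemma row_mul_det_neq0 (R : idomainType) n (S : 'M[R]_n) (y : 'rV[R]_n) :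
  \det S != 0 -> y *m S = 0 -> y = 0.
Proof.
move=> hS /(congr1 (mulmx^~ (\adj S))); rewrite -mulmxA mul_mx_adj mul_mx_scalar mul0mx.
move=> /rowP hy; apply/rowP => i; have := hy i; rewrite !mxE.
by move/eqP; rewrite mulf_eq0 (negbTE hS) => /eqP.
Qed.

Lemma sum_mxvec_index (R : nmodType) m n (G : 'I_(m * n) -> R) :
  \sum_k G k = \sum_(i < m) \sum_(j < n) G (mxvec_index i j).
Proof.
rewrite (reindex (uncurry (@mxvec_index m n))) /=; last exact: curry_mxvec_bij.
by rewrite pair_big /=; apply: eq_bigr => -[i j].
Qed.

Lemma triangular_free (R : fieldType) (V : lmodType R) (T : Type) m
    (g : 'I_m -> T -> V) (x : 'I_m -> T) :
  (forall l, g l (x l) != 0) -> (forall l l' : 'I_m, (l < l')%N -> g l' (x l) = 0) ->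
  forall c : 'I_m -> R, (forall j, \sum_l c l *: g l j = 0) -> forall l, c l = 0.
Proof.
move=> hx hlow c hc l; apply/eqP; apply: contraT => hl.
case: (@arg_minnP _ l (fun l => c l != 0) (fun l : 'I_m => l : nat) hl) => l0 hl0 hmin.
have := hc (x l0); rewrite (bigD1 l0) //= big1 ?addr0 => [/eqP|l' hl'].
  by rewrite scaler_eq0 (negbTE hl0) (negbTE (hx l0)).
have [->|cl'] := eqVneq (c l') 0; first by rewrite scale0r.
have hle := hmin l' cl'; have hne : (l' : nat) != l0 by [].
by rewrite hlow ?scaler0 //; rewrite ltn_neqAle eq_sym hne.
Qed.

Lemma exists_last_nonzero (V : zmodType) (f : int -> V) j B :
  f j != 0 -> (forall i, B < i -> f i = 0) ->
  exists j1, [/\ j <= j1, f j1 != 0 & forall i, j1 < i -> f i = 0].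
Proof.
move=> hj hB.
have ex : exists n : nat, f (j + n%:Z) != 0 by exists 0%N; rewrite addr0.
have ub n : f (j + n%:Z) != 0 -> (n <= absz (B - j))%N.
  by case: (leqP n (absz (B - j))) => // hlt; rewrite hB ?eqxx //; lia.
case: (ex_maxnP ex ub) => n1 hn1 hmax; exists (j + n1%:Z); split=> // [|i hi]; first lia.
apply/eqP; apply: contraT => hne.
have := hmax (absz (i - j)); have -> : j + (absz (i - j))%:Z = i by lia.
by move=> /(_ hne); lia.
Qed.

Lemma exists_first_nonzero (V : zmodType) (f : int -> V) j B :
  f j != 0 -> (forall i, i < B -> f i = 0) ->
  exists j1, [/\ j1 <= j, f j1 != 0 & forall i, i < j1 -> f i = 0].
Proof.
move=> hj hB.
have [|i hi|j1 [h1 h2 h3]] := @exists_last_nonzero _ (fun i => f (- i)) (- j) (- B).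
- by rewrite opprK.
- by rewrite hB //; lia.
by exists (- j1); split=> [||i hi]; rewrite ?opprK //; [lia | rewrite -[i]opprK h3 //; lia].
Qed.

Lemma exists_argmin_nat (f : nat -> nat) : exists m0, forall m, (f m0 <= f m)%N.
Proof.
suff h : forall B m, (f m <= B)%N -> exists m0, forall m', (f m0 <= f m')%N.
  exact: (h _ 0%N (leqnn _)).
elim=> [|B IH] m hm; first by exists m => m'; move: hm; rewrite leqn0 => /eqP ->.
case: (classic (forall m', (f m <= f m')%N)) => [h|/not_all_ex_not [m' hm']]; first by exists m.
by apply: (IH m'); move/negP: hm'; rewrite -ltnNge; lia.
Qed.

Lemma dependent_choice_chain (T : Type) (P : nat -> T -> Prop) (R : nat -> T -> T -> Prop) x :
  (forall j y, P j y -> exists z, P j.+1 z /\ R j z y) -> P 0%N x ->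
  exists s : nat -> T, [/\ s 0%N = x, forall j, P j (s j) & forall j, R j (s j.+1) (s j)].
Proof.
move=> hstep hx.
have [next hnext] : exists next : nat -> T -> T,
    forall j y, P j y -> P j.+1 (next j y) /\ R j (next j y) y.
  apply: (functional_choice (fun j (f : T -> T) => forall y, P j y -> P j.+1 (f y) /\ R j (f y) y)).
  move=> j; apply: (functional_choice (fun y z => P j y -> P j.+1 z /\ R j z y)) => y.
  by case: (classic (P j y)) => [/hstep [z hz]|hy]; [exists z | exists y].
pose s := fix s (j : nat) : T := if j is j'.+1 then next j' (s j') else x.
have hs : forall j, P j (s j) by elim=> [|j IH] //=; have [] := hnext _ _ IH.
by exists s; split=> // j; have [] := hnext _ _ (hs j).
Qed.

Section Operator.
Variables (F : numClosedFieldType) (d : nat) (a : int -> 'M[F]_d) (p q : int).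
Hypothesis hpq : p <= q.

Local Notation dseq := (dseq F d).
Local Notation bbl := (bbl a p q).
Local Notation kerA := (kerA a p q).

Lemma pp_bounds : pp p <= p /\ pp p <= 0.
Proof. rewrite /pp; split; lia. Qed.

Lemma qq_bounds : q <= qq q /\ 0 <= qq q.
Proof. rewrite /qq; split; lia. Qed.

Definition taun := absz (tau p q).

Lemma taunE : (taun : int) = qq q - pp p.
Proof. have [? ?] := pp_bounds; have [? ?] := qq_bounds; rewrite /taun /tau; lia. Qed.

Lemma eq_bbl (psi phi : dseq) j :
  (forall i, j + pp p <= i -> i <= j + qq q -> psi i = phi i) -> bbl psi j = bbl phi j.
Proof.
move=> h; apply: eq_bigr => -[i hi] _ /=; congr (_ *m _); apply: h.
  by have [? ?] := pp_bounds; lia.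
by have [? ?] := qq_bounds; move: hi; rewrite /bw; lia.
Qed.

Definition shiftz (m : int) (psi : dseq) : dseq := fun i => psi (i + m).

Lemma bbl_shiftz psi m j : bbl (shiftz m psi) j = bbl psi (j + m).
Proof. by apply: eq_bigr => i _; rewrite /shiftz; congr (_ *m psi _); ring. Qed.

Lemma bbl_add (psi phi : dseq) j : bbl (fun i => psi i + phi i) j = bbl psi j + bbl phi j.
Proof. by rewrite /Defs.bbl -big_split; apply: eq_bigr => i _; rewrite mulmxDr. Qed.

Lemma bbl0 j : bbl (fun _ => 0) j = 0.
Proof. by rewrite /Defs.bbl big1 // => i _; rewrite mulmx0. Qed.

Lemma bbl_sum m (c : 'I_m -> F) (g : 'I_m -> dseq) j :
  bbl (fun i => \sum_(l < m) c l *: g l i) j = \sum_(l < m) c l *: bbl (g l) j.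
Proof.
rewrite /Defs.bbl; under eq_bigr do rewrite mulmx_sumr.
rewrite exchange_big /=; apply: eq_bigr => l _; rewrite scaler_sumr.
by apply: eq_bigr => i _; rewrite scalemxAr.
Qed.

Definition seq_linear (g : dseq -> dseq) := forall c psi phi,
  g (fun j => c *: psi j + phi j) = (fun j => c *: g psi j + g phi j).

Lemma bbl_linear : seq_linear bbl.
Proof.
move=> c psi phi; apply: functional_extensionality => j.
rewrite bbl_add; congr (_ + _); rewrite /Defs.bbl scaler_sumr.
by apply: eq_bigr => i _; rewrite scalemxAr.
Qed.

Lemma funeq0P (psi : dseq) : psi = (fun _ => 0) <-> forall j, psi j = 0.
Proof. by split=> [-> //|h]; apply: functional_extensionality. Qed.

Lemma MfinP L R psi : Mfin a p q L R psi <->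
  (forall j, ~~ ((L <= j) && (j <= R)) -> psi j = 0) /\
  (forall j, L - pp p <= j -> j <= R - qq q -> bbl psi j = 0).
Proof.
rewrite /Mfin /Pfin funeq0P; split=> [[h1 h2]|[h1 h2]]; split.
- by move=> j hj; rewrite -h1 (negbTE hj).
- by move=> j hj1 hj2; have := h2 j; rewrite hj1 hj2.
- by apply: functional_extensionality => j; case: ifP => // /negbT /h1.
- by move=> j; case: ifP => // /andP[hj1 hj2]; rewrite h2.
Qed.

Lemma iter_Pge_shiftL L (psi : dseq) (k : nat) :
  iter k.+1 (fun f => Pge L (shiftL f)) psi = fun j => if L <= j then psi (j + k.+1%:Z) else 0.
Proof.
apply: functional_extensionality; elim: k => [|k IH] j; first by rewrite /= /Pge /shiftL.
rewrite iterS {1}/Pge /shiftL IH; case: ifP => // h; rewrite ifT; last by lia.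
by congr psi; lia.
Qed.

Lemma iter_Ple_shiftR R (psi : dseq) (k : nat) :
  iter k.+1 (fun f => Ple R (shiftR f)) psi = fun j => if j <= R then psi (j - k.+1%:Z) else 0.
Proof.
apply: functional_extensionality; elim: k => [|k IH] j; first by rewrite /= /Ple /shiftR.
rewrite iterS {1}/Ple /shiftR IH; case: ifP => // h; rewrite ifT; last by lia.
by congr psi; lia.
Qed.

Lemma FLminusP L psi : FLminus a p q L psi <->
  [/\ forall j, j < L -> psi j = 0,
      forall j, L - pp p <= j -> bbl psi j = 0 &
      exists k : nat, forall j, L + k%:Z <= j -> psi j = 0].
Proof.
rewrite /FLminus /Mge /Pge funeq0P; split.
  move=> [[h1 h2] [[|k] [// _ hk]]]; split.
  - by move=> j hj; rewrite -h1 ifF //; lia.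
  - by move=> j hj; have := h2 j; rewrite hj.
  - exists k.+1 => j hj; move: hk; rewrite iter_Pge_shiftL funeq0P => /(_ (j - k.+1%:Z)).
    by rewrite ifT ?subrK //; lia.
move=> [h1 h2 [k hk]]; split; first split.
- by apply: functional_extensionality => j; case: ifP => // /negbT h; rewrite h1 //; lia.
- by move=> j; case: ifP => // /h2.
exists k.+1; split=> //; rewrite iter_Pge_shiftL funeq0P => j.
by case: ifP => // hj; apply: hk; lia.
Qed.

Lemma FRplusP R psi : FRplus a p q R psi <->
  [/\ forall j, R < j -> psi j = 0,
      forall j, j <= R - qq q -> bbl psi j = 0 &
      exists k : nat, forall j, j <= R - k%:Z -> psi j = 0].
Proof.
rewrite /FRplus /Mle /Ple funeq0P; split.
  move=> [[h1 h2] [[|k] [// _ hk]]]; split.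
  - by move=> j hj; rewrite -h1 ifF //; lia.
  - by move=> j hj; have := h2 j; rewrite hj.
  - exists k.+1 => j hj; move: hk; rewrite iter_Ple_shiftR funeq0P => /(_ (j + k.+1%:Z)).
    by rewrite ifT ?addrK //; lia.
move=> [h1 h2 [k hk]]; split; first split.
- by apply: functional_extensionality => j; case: ifP => // /negbT h; rewrite h1 //; lia.
- by move=> j; case: ifP => // /h2.
exists k.+1; split=> //; rewrite iter_Ple_shiftR funeq0P => j.
by case: ifP => // hj; apply: hk; lia.
Qed.

Lemma Pfin_Mfin L R phi : kerA phi -> Mfin a p q L R (Pfin L R phi).
Proof.
move=> hphi; apply/MfinP; split=> [j hj|j h1 h2]; first by rewrite /Pfin (negbTE hj).
rewrite -(hphi j); apply: eq_bbl => i hi1 hi2; have [? ?] := pp_bounds; have [? ?] := qq_bounds.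
by rewrite /Pfin ifT //; apply/andP; split; lia.
Qed.

Lemma Pfin_Pfin L1 R1 L2 R2 (z : dseq) :
  L1 <= L2 -> R2 <= R1 -> Pfin L2 R2 (Pfin L1 R1 z) = Pfin L2 R2 z.
Proof.
move=> h1 h2; apply: functional_extensionality => j; rewrite /Pfin.
by case: ifP => // /andP[h3 h4]; rewrite ifT //; apply/andP; split; lia.
Qed.

Lemma Mfin_Pfin L1 R1 L2 R2 (z : dseq) : Mfin a p q L1 R1 z -> L1 <= L2 -> R2 <= R1 ->
  Mfin a p q L2 R2 (Pfin L2 R2 z).
Proof.
move=> /MfinP [hs he] h1 h2; apply/MfinP.
split=> [j hj|j hj1 hj2]; first by rewrite /Pfin (negbTE hj).
rewrite -(he j); [|lia|lia].
apply: eq_bbl => i hi1 hi2; have [? ?] := pp_bounds; have [? ?] := qq_bounds.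
by rewrite /Pfin ifT //; apply/andP; split; lia.
Qed.

Lemma Mfin_add L R (u v : dseq) : Mfin a p q L R u -> Mfin a p q L R v ->
  Mfin a p q L R (fun j => u j + v j).
Proof.
move=> /MfinP [hu1 hu2] /MfinP [hv1 hv2]; apply/MfinP; split=> [j hj|j h1 h2].
  by rewrite hu1 ?hv1 ?addr0.
by rewrite bbl_add hu2 ?hv2 ?addr0.
Qed.

Section Kernel.
Variable k : nat.
Hypothesis hk : has_dim kerA k.

Lemma ker_dependent (g : 'I_k.+1 -> dseq) : (forall l, kerA (g l)) ->
  exists c : 'I_k.+1 -> F, (exists l, c l != 0) /\ forall j, \sum_l c l *: g l j = 0.
Proof.
move=> hg; case: hk => b [_ [_ hspan]].
have [e he] : exists e : 'I_k.+1 -> 'I_k -> F, forall l j, g l j = \sum_(i < k) e l i *: b i j.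
  apply: (@fin_all_exists _ (fun _ => 'I_k -> F)
    (fun l e => forall j, g l j = \sum_(i < k) e i *: b i j)) => l.
  exact: hspan.
pose C : 'M[F]_(k.+1, k) := \matrix_(l, i) e l i.
have /rowV0Pn [c /sub_kermxP hc hc0] : kermx C != 0.
  by rewrite kermx_eq0 /row_free; apply: contraTneq (rank_leq_col C) => ->; rewrite ltnn.
have [l0 hl0] : exists l0, c 0 l0 != 0.
  apply/existsP; apply: contraNT hc0 => /existsPn h.
  by apply/eqP/rowP => l; rewrite mxE; apply/eqP/negPn.
exists (c 0); split; first by exists l0.
move=> j; under eq_bigr do rewrite he scaler_sumr.
rewrite exchange_big /= big1 // => i _.
have /rowP /(_ i) := hc; rewrite !mxE => h0.
rewrite -[RHS](scale0r (b i j)) -h0 scaler_suml; apply: eq_bigr => l _.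
by rewrite /C !mxE scalerA.
Qed.

(* The [k + 1] shifts of [phi] by [0, s, ..., k s] are linearly dependent; the one with
   the largest shift among the non-zero coefficients is the only one not vanishing at
   [m0 - s * shift]. *)
Lemma kerA_no_extremal_point (phi : dseq) (s m0 : int) : s * s = 1 -> kerA phi -> phi m0 != 0 ->
  (forall i, s * (i - m0) < 0 -> phi i = 0) -> False.
Proof.
move=> hs hphi hm0 hz.
pose g (l : 'I_k.+1) := shiftz (s * l%:Z) phi.
have [c [[l0 hl0] hc]] := @ker_dependent g (fun l j => etrans (bbl_shiftz _ _ _) (hphi _)).
case: (@arg_maxnP _ l0 (fun l => c l != 0) (fun l : 'I_k.+1 => l : nat) hl0) => ls hls hmax.
have := hc (m0 - s * ls%:Z); rewrite (bigD1 ls) //= big1.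
  rewrite addr0 /g /shiftz subrK => /eqP; rewrite scaler_eq0 (negbTE hls).
  by rewrite (negbTE hm0).
move=> l hl; rewrite /g /shiftz; have [->|cl] := eqVneq (c l) 0; first by rewrite scale0r.
have hle := hmax l cl; have hne : (l : nat) != ls by [].
rewrite hz ?scaler0 //.
have -> : m0 - s * ls%:Z + s * l%:Z - m0 = s * (l%:Z - ls%:Z) by ring.
rewrite mulrA hs mul1r; lia.
Qed.

Lemma kerA_halfline0 (phi : dseq) (s M : int) : s * s = 1 -> kerA phi ->
  (forall i, s * (i - M) <= 0 -> phi i = 0) -> forall i, phi i = 0.
Proof.
move=> hs hphi hM i1; apply/eqP; apply: contraT => hi1.
have hs1 : s = 1 \/ s = -1 by nia.
have hi1M : 0 < s * (i1 - M).
  by case: (lerP (s * (i1 - M)) 0) => // /hM h; rewrite h eqxx in hi1.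
have ex : exists n : nat, phi (M + s * n.+1%:Z) != 0.
  exists (absz (i1 - M)).-1.
  by have -> : M + s * (absz (i1 - M)).-1.+1%:Z = i1 by case: hs1 => ?; subst s; lia.
case: (ex_minnP ex) => n0 hn0 hmin.
exfalso; apply: (kerA_no_extremal_point hs hphi hn0) => i hi.
case: (lerP (s * (i - M)) 0) => [/hM //|hiM].
apply/eqP; apply: contraT => hne.
have := hmin (absz (i - M)).-1.
have -> : M + s * (absz (i - M)).-1.+1%:Z = i by case: hs1 => ?; subst s; lia.
by move=> /(_ hne); case: hs1 => ?; subst s; lia.
Qed.

Lemma kerA_window0 (phi : dseq) (c : int) : kerA phi ->
  (forall i, c <= i -> i < c + taun%:Z -> phi i = 0) -> forall i, phi i = 0.
Proof.
move=> hphi hw.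
have ht := taunE; have [? ?] := pp_bounds; have [? ?] := qq_bounds.
pose lo : dseq := fun i => if i < c then phi i else 0.
pose hi : dseq := fun i => if c + taun%:Z <= i then phi i else 0.
have hlo : kerA lo.
  move=> j; case: (ltrP (j + pp p) c) => hj.
    rewrite -(hphi j); apply: eq_bbl => i hi1 hi2; rewrite /lo.
    by case: ifP => // /negbT; rewrite -leNgt => hci; rewrite hw //; lia.
  by rewrite -(bbl0 j); apply: eq_bbl => i hi1 hi2; rewrite /lo ifF //; lia.
have hhi : kerA hi.
  move=> j; case: (ltrP (j + pp p) c) => hj.
    by rewrite -(bbl0 j); apply: eq_bbl => i hi1 hi2; rewrite /hi ifF //; lia.
  rewrite -(hphi j); apply: eq_bbl => i hi1 hi2; rewrite /hi.
  by case: ifP => // /negbT; rewrite -ltNge => h; rewrite hw //; lia.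
have lo0 := @kerA_halfline0 _ (-1) c erefl hlo.
have hi0 := @kerA_halfline0 _ 1 (c + taun%:Z - 1) erefl hhi.
move=> i; case: (ltrP i c) => hic.
  by have := lo0 _ i; rewrite /lo hic; apply => j hj; rewrite ifF //; lia.
case: (ltrP i (c + taun%:Z)) => hit; first exact: hw.
by have := hi0 _ i; rewrite /hi ifT //; apply => j hj; rewrite ifF //; lia.
Qed.

End Kernel.

(* The window [L, L + n - 1] of a sequence, stored site by site as a row vector. *)
Definition rV_of_seq (L : int) (n : nat) (psi : dseq) : 'rV[F]_(n * d) :=
  mxvec (\matrix_(i < n, al < d) psi (L + i%:Z) al 0).

Definition seq_of_rV (L : int) (n : nat) (u : 'rV[F]_(n * d)) : dseq :=
  fun j => \sum_(i < n) if L + i%:Z == j then (row i (vec_mx u))^T else 0.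

Section WindowVectors.
Variables (L : int) (n : nat).

Lemma seq_of_rV_at (u : 'rV[F]_(n * d)) (i : 'I_n) :
  seq_of_rV L u (L + i%:Z) = (row i (vec_mx u))^T.
Proof.
rewrite /seq_of_rV (bigD1 i) //= eqxx big1 ?addr0 // => i' hi'.
by rewrite ifF //; apply/negbTE; apply: contra hi' => /eqP h; apply/eqP/val_inj => /=; lia.
Qed.

Lemma seq_of_rV_out (u : 'rV[F]_(n * d)) j :
  ~~ ((L <= j) && (j <= L + n%:Z - 1)) -> seq_of_rV L u j = 0.
Proof.
move=> h; rewrite /seq_of_rV big1 // => i _; rewrite ifF //; apply/negbTE.
by apply: contra h => /eqP <-; have := ltn_ord i; lia.
Qed.

Lemma seq_of_rVK (u : 'rV[F]_(n * d)) : rV_of_seq L n (seq_of_rV L u) = u.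
Proof.
rewrite /rV_of_seq -[RHS]vec_mxK; congr mxvec; apply/matrixP => i al.
by rewrite mxE seq_of_rV_at !mxE.
Qed.

Lemma rV_of_seqK psi j : seq_of_rV L (rV_of_seq L n psi) j =
  if (L <= j) && (j <= L + n%:Z - 1) then psi j else 0.
Proof.
case: ifP => h; last by rewrite seq_of_rV_out // h.
have hi : (absz (j - L) < n)%N by lia.
have hj : j = L + (Ordinal hi : nat)%:Z by rewrite /=; lia.
rewrite [in LHS]hj seq_of_rV_at /rV_of_seq mxvecK; apply/matrixP => x y.
by rewrite !mxE -hj (ord1 y).
Qed.

Lemma rV_of_seqK_supp psi : (forall j, ~~ ((L <= j) && (j <= L + n%:Z - 1)) -> psi j = 0) ->
  seq_of_rV L (rV_of_seq L n psi) = psi.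
Proof.
by move=> h; apply: functional_extensionality => j; rewrite rV_of_seqK; case: ifP => // /negbT /h.
Qed.

Lemma eq_rV_of_seq (psi phi : dseq) : (forall j, L <= j -> j <= L + n%:Z - 1 -> psi j = phi j) ->
  rV_of_seq L n psi = rV_of_seq L n phi.
Proof.
move=> h; congr mxvec; apply/matrixP => i al; rewrite !mxE h //; first lia.
by have := ltn_ord i; lia.
Qed.

Lemma rV_of_seq_sum m (c : 'I_m -> F) (g : 'I_m -> dseq) :
  rV_of_seq L n (fun j => \sum_(l < m) c l *: g l j) = \sum_(l < m) c l *: rV_of_seq L n (g l).
Proof.
rewrite /rV_of_seq; under [RHS]eq_bigr do rewrite -linearZ.
rewrite -linear_sum; congr mxvec; apply/matrixP => i al; rewrite !mxE !summxE.
by apply: eq_bigr => l _; rewrite !mxE.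
Qed.

Lemma rV_of_seq_linear c (psi phi : dseq) :
  rV_of_seq L n (fun j => c *: psi j + phi j) = c *: rV_of_seq L n psi + rV_of_seq L n phi.
Proof.
by rewrite /rV_of_seq -linearZ -linearD; congr mxvec; apply/matrixP => i al; rewrite !mxE.
Qed.

Lemma rV_of_seq0 : rV_of_seq L n (fun _ => 0) = 0.
Proof.
rewrite /rV_of_seq -(linear0 (@mxvec _ n d)); congr mxvec.
by apply/matrixP => i al; rewrite !mxE.
Qed.

Lemma rV_of_seqD (psi phi : dseq) :
  rV_of_seq L n (fun j => psi j + phi j) = rV_of_seq L n psi + rV_of_seq L n phi.
Proof.
rewrite -[rV_of_seq L n psi]scale1r -rV_of_seq_linear.
by apply: eq_rV_of_seq => j _ _; rewrite scale1r.
Qed.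

Lemma rV_of_seq_eq0P psi :
  rV_of_seq L n psi = 0 <-> forall j, L <= j -> j <= L + n%:Z - 1 -> psi j = 0.
Proof.
split=> [h j h1 h2|h]; last by rewrite -rV_of_seq0; apply: eq_rV_of_seq => j h1 h2; rewrite h.
have := rV_of_seqK psi j; rewrite h1 h2 h /= => <-.
by rewrite /seq_of_rV big1 // => i _; rewrite linear0 row0 trmx0; case: ifP.
Qed.

Lemma seq_of_rV_linear c (u v : 'rV[F]_(n * d)) :
  seq_of_rV L (c *: u + v) = (fun j => c *: seq_of_rV L u j + seq_of_rV L v j).
Proof.
apply: functional_extensionality => j; rewrite /seq_of_rV scaler_sumr -big_split.
apply: eq_bigr => i _; case: ifP => _ /=; last by rewrite scaler0 addr0.
by rewrite !linearD !linearZ.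
Qed.

Lemma seq_of_rVD (u v : 'rV[F]_(n * d)) :
  seq_of_rV L (u + v) = (fun j => seq_of_rV L u j + seq_of_rV L v j).
Proof.
by rewrite -{1}[u]scale1r seq_of_rV_linear; apply: functional_extensionality => j; rewrite scale1r.
Qed.

Lemma seq_of_rV0 : seq_of_rV L (0 : 'rV[F]_(n * d)) = fun _ => 0.
Proof.
apply: functional_extensionality => j; rewrite /seq_of_rV big1 // => i _.
by rewrite linear0 row0 trmx0; case: ifP.
Qed.

End WindowVectors.

Definition window_mx (g : dseq -> dseq) L n J m : 'M[F]_(n * d, m * d) :=
  lin1_mx (fun u => rV_of_seq J m (g (seq_of_rV L u))).

Lemma mul_window_mx g L n J m (u : 'rV[F]_(n * d)) : seq_linear g ->
  u *m window_mx g L n J m = rV_of_seq J m (g (seq_of_rV L u)).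
Proof.
by move=> hg; rewrite mul_rV_lin1E // => c v w; rewrite seq_of_rV_linear hg rV_of_seq_linear.
Qed.

Lemma sub_kermx_window L n J m (v : 'rV[F]_(n * d)) :
  (v <= kermx (window_mx bbl L n J m))%MS <->
  forall j, J <= j -> j <= J + m%:Z - 1 -> bbl (seq_of_rV L v) j = 0.
Proof.
rewrite sub_kermx mul_window_mx; last exact: bbl_linear.
by split=> [/eqP/rV_of_seq_eq0P //|/rV_of_seq_eq0P ->].
Qed.

Definition bulk_mx L n := window_mx bbl L n (L - pp p) (n - taun).
Definition sol_mx L n := kermx (bulk_mx L n).

Lemma sol_mxP L n (v : 'rV[F]_(n * d)) : (taun <= n)%N ->
  (v <= sol_mx L n)%MS <-> Mfin a p q L (L + n%:Z - 1) (seq_of_rV L v).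
Proof.
move=> htn; rewrite sub_kermx_window MfinP; have ht := taunE.
split=> [h|[_ h] j h1 h2]; last by apply: h => //; move: htn; lia.
by split=> [|j h1 h2]; [exact: seq_of_rV_out | apply: h => //; lia].
Qed.

Section Regular.
Hypothesis hreg : regular a p q.

Lemma seq_of_rV_delta L n (i : 'I_n) (al : 'I_d) j :
  seq_of_rV L (delta_mx 0 (mxvec_index i al)) j = if j == L + i%:Z then delta_mx al 0 else 0.
Proof.
case: ifP => [/eqP ->|hj].
  rewrite seq_of_rV_at vec_mx_delta; apply/matrixP => x y.
  by rewrite !mxE (ord1 y) !eqxx /= andbT.
rewrite /seq_of_rV big1 // => i' _; case: ifP => // /eqP hi'.
rewrite vec_mx_delta; apply/matrixP => x y; rewrite !mxE.
suff -> : (i' == i) = false by rewrite ?andbF.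
by apply/negbTE; apply: contraFN hj => /eqP hii; rewrite -hi' hii.
Qed.

Lemma bulk_mx_delta L n (i : 'I_n) (al : 'I_d) (s : 'I_(n - taun)) (be : 'I_d) :
  bulk_mx L n (mxvec_index i al) (mxvec_index s be) =
  \sum_(r < (bw p q).+1) (if (s + absz (p - pp p) + r == i)%N then a (p + r%:Z) be al else 0).
Proof.
rewrite /bulk_mx /window_mx mxE /rV_of_seq mxvecE mxE /Defs.bbl summxE.
apply: eq_bigr => r _; rewrite seq_of_rV_delta; have [? ?] := pp_bounds.
case: ifP => /eqP h; case: ifP => /eqP h'.
- rewrite mxE (bigD1 al) //= big1 ?addr0; first by rewrite mxE !eqxx mulr1.
  by move=> x hx; rewrite mxE (negbTE hx) mulr0.
- by exfalso; apply: h'; move: h; lia.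
- by exfalso; apply: h; move: h'; lia.
- by rewrite mulmx0 mxE.
Qed.

Definition poly_row m (y : 'rV[F]_(m * d)) : 'rV[{poly F}]_d :=
  \row_be \sum_(s < m) y 0 (mxvec_index s be) *: 'X^s.

Lemma poly_row_eq0 m (y : 'rV[F]_(m * d)) : poly_row y = 0 -> y = 0.
Proof.
move=> hy; apply/rowP => k; case/mxvec_indexP: k => s be.
have := congr1 (fun M : 'rV[{poly F}]_d => (M 0 be)`_s) hy; rewrite !mxE coef_sum coef0.
rewrite (bigD1 s) //= big1 ?addr0; first by rewrite coefZ coefXn eqxx mulr1.
move=> s' hs'; rewrite coefZ coefXn eq_sym.
by have /negbTE -> : (s' : nat) != s by []; rewrite mulr0.
Qed.

(* The transpose of the bulk matrix is multiplication by the symbol, read on coefficients. *)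
Lemma poly_row_symb L n (y : 'rV[F]_((n - taun) * d)) al : (taun <= n)%N ->
  'X^(absz (p - pp p)) * (poly_row y *m symb_poly a p q) 0 al =
  \sum_(i < n) (y *m (bulk_mx L n)^T) 0 (mxvec_index i al) *: 'X^i.
Proof.
move=> htn; set e0 := absz (p - pp p).
under [RHS]eq_bigr do
  (rewrite mxE sum_mxvec_index /= scaler_suml; under eq_bigr do rewrite scaler_suml).
rewrite [RHS]exchange_big /=.
under [RHS]eq_bigr => s _ do rewrite exchange_big /=.
rewrite [RHS]exchange_big /= [X in _ * X]mxE mulr_sumr; apply: eq_bigr => be _.
rewrite !mxE mulr_suml mulr_sumr; apply: eq_bigr => s _.
under [RHS]eq_bigr do rewrite mxE bulk_mx_delta mulr_sumr scaler_suml.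
rewrite [RHS]exchange_big /= !mulr_sumr; apply: eq_bigr => r _.
have hlt : (s + e0 + r < n)%N.
  have := ltn_ord s; have := ltn_ord r; have := taunE; have [? ?] := pp_bounds.
  have [? ?] := qq_bounds; move: htn; rewrite /e0 /bw /taun; lia.
rewrite (bigD1 (Ordinal hlt)) //= eqxx big1 ?addr0; last first.
  move=> i hi; rewrite ifF ?mulr0 ?scale0r //; apply/negbTE; apply: contra hi => /eqP hi.
  by apply/eqP/val_inj; rewrite /= hi.
by rewrite -!mul_polyC polyCM !exprD; ring.
Qed.

Lemma row_free_bulk_mx_tr L n : (taun <= n)%N -> row_free (bulk_mx L n)^T.
Proof.
move=> htn; rewrite -kermx_eq0; apply/eqP/row_matrixP => i; rewrite row0.
set y := row i _; have hy : y *m (bulk_mx L n)^T = 0 by rewrite -row_mul mulmx_ker row0.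
apply: poly_row_eq0; apply: (row_mul_det_neq0 hreg); apply/rowP => al; rewrite [RHS]mxE.
have := poly_row_symb L y al htn; rewrite hy big1 => [/eqP|i' _]; last by rewrite mxE scale0r.
by rewrite mulf_eq0 expf_eq0 polyX_eq0 andbF => /eqP.
Qed.

Lemma rank_sol_mx L n : (taun <= n)%N -> \rank (sol_mx L n) = (taun * d)%N.
Proof.
move=> htn; rewrite mxrank_ker -mxrank_tr.
move: (row_free_bulk_mx_tr L htn); rewrite /row_free => /eqP ->.
by rewrite -mulnBl; congr (_ * _)%N; lia.
Qed.

Lemma Mfin_free_card L n m (g : 'I_m -> dseq) : (taun <= n)%N ->
  (forall l, Mfin a p q L (L + n%:Z - 1) (g l)) ->
  (forall c : 'I_m -> F, (forall j, \sum_l c l *: g l j = 0) -> forall l, c l = 0) ->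
  (m <= taun * d)%N.
Proof.
move=> htn hg hfree.
pose G : 'M[F]_(m, n * d) := \matrix_l rV_of_seq L n (g l).
have hsupp l j : ~~ ((L <= j) && (j <= L + n%:Z - 1)) -> g l j = 0.
  by case/MfinP: (hg l) => + _; apply.
have hGK : (G <= sol_mx L n)%MS.
  by apply/row_subP => l; rewrite rowK sol_mxP // rV_of_seqK_supp //; apply: hsupp.
have /eqP hr : row_free G.
  rewrite -kermx_eq0; apply/eqP/row_matrixP => i; rewrite row0; set y := row i _.
  have : y *m G = 0 by rewrite -row_mul mulmx_ker row0.
  rewrite mulmx_sum_row; under eq_bigr do rewrite rowK.
  rewrite -rV_of_seq_sum => /rV_of_seq_eq0P hz; apply/rowP => l; rewrite [RHS]mxE.
  apply: (hfree (fun l => y 0 l) _ l) => j.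
  case hj : ((L <= j) && (j <= L + n%:Z - 1)); first by case/andP: hj; apply: hz.
  by rewrite big1 // => l' _; rewrite hsupp ?hj // scaler0.
by rewrite -hr -(rank_sol_mx L htn); apply: mxrankS.
Qed.

Lemma Mfin_free_card_add L n m1 m2 (g1 : 'I_m1 -> dseq) (g2 : 'I_m2 -> dseq) : (taun <= n)%N ->
  (forall l, Mfin a p q L (L + n%:Z - 1) (g1 l)) ->
  (forall l, Mfin a p q L (L + n%:Z - 1) (g2 l)) ->
  (forall (c1 : 'I_m1 -> F) (c2 : 'I_m2 -> F),
     (forall j, \sum_l c1 l *: g1 l j + \sum_l c2 l *: g2 l j = 0) ->
     (forall l, c1 l = 0) /\ (forall l, c2 l = 0)) ->
  (m1 + m2 <= taun * d)%N.
Proof.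
move=> htn h1 h2 hfree.
pose g (l : 'I_(m1 + m2)) := match split l with inl i => g1 i | inr r => g2 r end.
apply: (@Mfin_free_card L n _ g htn) => [l|c hc]; first by rewrite /g; case: (split l).
have [hc1 hc2] : (forall l, c (lshift m2 l) = 0) /\ (forall l, c (rshift m1 l) = 0).
  have sl (i : 'I_m1) : split (lshift m2 i) = inl i := unsplitK (inl i).
  have sr (i : 'I_m2) : split (rshift m1 i) = inr i := unsplitK (inr i).
  apply: hfree => j; have := hc j; rewrite big_split_ord /= /g.
  by under eq_bigr do rewrite sl; under [X in _ + X = _]eq_bigr do rewrite sr.
by move=> l; rewrite -(splitK l); case: (split l) => [i|r] /=; [exact: hc1|exact: hc2].
Qed.

Section KernelDim.
Variable k : nat.
Hypothesis hk : has_dim kerA k.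

Lemma kerA_dim_le : (k <= taun * d)%N.
Proof.
case: (hk) => b [hb [hfree _]].
have [? ?] := pp_bounds; have [? ?] := qq_bounds; have ht := taunE.
apply: (@Mfin_free_card 0 taun k (fun r => Pfin 0 (taun%:Z - 1) (b r)) (leqnn _)) => [r|c hc].
  by rewrite add0r; apply: Pfin_Mfin.
apply: hfree; apply: (@kerA_window0 k hk _ 0) => [j|i hi1 hi2].
  by rewrite bbl_sum big1 // => r _; rewrite hb scaler0.
rewrite -[RHS](hc i); apply: eq_bigr => r _; rewrite /Pfin ifT //; lia.
Qed.

Definition sigma := (taun * d - k)%N.

(* Such a family stays independent of the restrictions of a basis of [ker A]: a combination
   of the latter vanishing on [t] consecutive sites is zero by [kerA_window0]. *)
Lemma triangular_Mfin_card L n m (g : 'I_m -> dseq) (x : 'I_m -> int) c :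
  (taun <= n)%N -> L <= c -> c + taun%:Z <= L + n%:Z ->
  (forall l, Mfin a p q L (L + n%:Z - 1) (g l)) ->
  (forall l j, c <= j -> j < c + taun%:Z -> g l j = 0) ->
  (forall l, g l (x l) != 0) -> (forall l l' : 'I_m, (l < l')%N -> g l' (x l) = 0) ->
  (m + k <= taun * d)%N.
Proof.
move=> htn hLc hcn hg hzero hx hlow; case: (hk) => b [hb [hfree _]].
apply: (@Mfin_free_card_add L n m k g (fun r => Pfin L (L + n%:Z - 1) (b r)) htn hg).
  by move=> r; apply: Pfin_Mfin.
move=> c1 c2 hc.
have hc2 : forall r, c2 r = 0.
  apply: hfree; apply: (@kerA_window0 k hk _ c) => [j|j hj1 hj2].
    by rewrite bbl_sum big1 // => r _; rewrite hb scaler0.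
  have := hc j; rewrite big1 ?add0r => [h|l _]; last by rewrite hzero ?scaler0.
  by rewrite -[RHS]h; apply: eq_bigr => r _; rewrite /Pfin ifT //; apply/andP; split; lia.
split=> //; apply: (triangular_free hx hlow) => j.
by have := hc j; rewrite [X in _ + X]big1 ?addr0 // => r _; rewrite hc2 scale0r.
Qed.

(* The shifts of [psi], truncated at [L], up to its last non-zero site form a triangular
   family vanishing on the [t] sites after that site. *)
Lemma FLminus_supp L psi : FLminus a p q L psi -> forall j, L + sigma%:Z <= j -> psi j = 0.
Proof.
case/FLminusP => hs heq [kk hkk] j hj; apply/eqP; apply: contraT => hnz.
have [j1 [hjj1 hj1 hz]] := exists_last_nonzero hnz (fun i hi => hkk i (ltW hi)).
have [? ?] := pp_bounds; have [? ?] := qq_bounds; have ht := taunE.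
have hL : L <= j1 by case: (ltrP j1 L) => // /hs h; rewrite h eqxx in hj1.
pose n1 := absz (j1 - L).
pose g (i : 'I_n1.+1) : dseq := fun x => if L <= x then psi (x + i%:Z) else 0.
suff : (n1.+1 + k <= taun * d)%N by rewrite /sigma in hj; lia.
apply: (@triangular_Mfin_card L (n1.+1 + taun) _ g (fun i => j1 - i%:Z) (L + n1.+1%:Z)).
- exact: leq_addl.
- lia.
- lia.
- move=> i; apply/MfinP; split=> [x hx|x hx1 hx2].
    by rewrite /g; case: ifP => // hx1; apply: hz; have := ltn_ord i; move: hx; rewrite hx1 /=; lia.
  rewrite (@eq_bbl _ (shiftz i%:Z psi)) => [|y hy1 hy2]; first by rewrite bbl_shiftz heq //; lia.
  by rewrite /g /shiftz ifT //; lia.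
- by move=> i x hx1 hx2; rewrite /g ifT ?hz //; lia.
- by move=> i; rewrite /g ifT ?subrK //; have := ltn_ord i; lia.
- by move=> i i' hii'; rewrite /g; case: ifP => // _; rewrite hz //; lia.
Qed.

Lemma FRplus_supp R psi : FRplus a p q R psi -> forall j, j <= R - sigma%:Z -> psi j = 0.
Proof.
case/FRplusP => hs heq [kk hkk] j hj; apply/eqP; apply: contraT => hnz.
have [j1 [hjj1 hj1 hz]] := exists_first_nonzero hnz (fun i hi => hkk i (ltW hi)).
have [? ?] := pp_bounds; have [? ?] := qq_bounds; have ht := taunE.
have hR : j1 <= R by case: (lerP j1 R) => // /hs h; rewrite h eqxx in hj1.
pose n1 := absz (R - j1).
pose L := R - (n1.+1 + taun)%N%:Z + 1.
pose g (i : 'I_n1.+1) : dseq := fun x => if x <= R then psi (x - i%:Z) else 0.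
suff : (n1.+1 + k <= taun * d)%N by rewrite /sigma in hj; lia.
apply: (@triangular_Mfin_card L (n1.+1 + taun) _ g (fun i => j1 + i%:Z) L).
- exact: leq_addl.
- lia.
- lia.
- move=> i; apply/MfinP; split=> [x hx|x hx1 hx2].
    by rewrite /g; case: ifP => // hx1; apply: hz; have := ltn_ord i; move: hx; rewrite /L; lia.
  rewrite (@eq_bbl _ (shiftz (- i%:Z) psi)) => [|y hy1 hy2].
    by rewrite bbl_shiftz heq //; lia.
  by rewrite /g /shiftz ifT //; lia.
- by move=> i x hx1 hx2; rewrite /g; case: ifP => // _; rewrite hz //; lia.
- by move=> i; rewrite /g ifT ?addrK //; have := ltn_ord i; lia.
- by move=> i i' hii'; rewrite /g; case: ifP => // _; rewrite hz //; lia.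
Qed.

Section Window.
Variables L R : int.
Hypothesis hLR : L <= R.
Let N := absz (R - L + 1).
Hypothesis hN : (sigma.*2 + taun <= N)%N.

Lemma window_end : R = L + N%:Z - 1.
Proof. by rewrite /N; lia. Qed.

Lemma Mfin_rV_of_seqK psi : Mfin a p q L R psi -> seq_of_rV L (rV_of_seq L N psi) = psi.
Proof. by case/MfinP => hs _; apply: rV_of_seqK_supp; rewrite -window_end. Qed.

Lemma FLminus_Mfin psi : FLminus a p q L psi -> Mfin a p q L R psi.
Proof.
move=> hF; have hs := FLminus_supp hF; case/FLminusP: hF => h1 h2 _.
apply/MfinP; split=> [j|j hj _]; last exact: h2.
rewrite negb_and -!ltNge => /orP[/h1 //|hj]; apply: hs; move: hN; rewrite /N; lia.
Qed.

Lemma FRplus_Mfin psi : FRplus a p q R psi -> Mfin a p q L R psi.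
Proof.
move=> hF; have hs := FRplus_supp hF; case/FRplusP: hF => h1 h2 _.
apply/MfinP; split=> [j|j _ hj]; last exact: h2.
rewrite negb_and -!ltNge => /orP[hj|/h1 //]; apply: hs; move: hN; rewrite /N; lia.
Qed.

(* The supports [L, L + sigma) and (R - sigma, R] leave [t] free sites in between. *)
Lemma summands_indep u v w : PkerA a p q L R u -> FLminus a p q L v -> FRplus a p q R w ->
  (forall j, u j + v j + w j = 0) -> [/\ forall j, u j = 0, forall j, v j = 0 & forall j, w j = 0].
Proof.
move=> [phi [hphi ->]] hv hw h.
have hvs := FLminus_supp hv; have hws := FRplus_supp hw.
case/FLminusP: hv => hv1 _ _; case/FRplusP: hw => hw1 _ _.
have hphi0 : forall j, phi j = 0.
  apply: (@kerA_window0 k hk _ (L + sigma%:Z)) => // j hj1 hj2.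
  have := h j; rewrite hvs // hws; last by move: hN; rewrite /N; lia.
  by rewrite !addr0 /Pfin ifT //; apply/andP; split; move: hN; rewrite /N; lia.
have hu j : Pfin L R phi j = 0 by rewrite /Pfin hphi0; case: ifP.
split=> // j.
  case: (ltrP j (L + sigma%:Z)) => hj; last exact: hvs.
  by have := h j; rewrite hu add0r hws ?addr0 //; move: hN; rewrite /N; lia.
case: (lerP j (R - sigma%:Z)) => hj; first exact: hws.
by have := h j; rewrite hu add0r hvs ?add0r //; move: hN; rewrite /N; lia.
Qed.

Definition FLminus_mx := kermx (window_mx bbl L N (L - pp p) N).
Definition FRplus_mx := kermx (window_mx bbl L N (L - qq q) N).

Lemma FLminus_mxP v : (v <= FLminus_mx)%MS -> FLminus a p q L (seq_of_rV L v).
Proof.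
move=> /sub_kermx_window hv; apply/FLminusP; have [? ?] := pp_bounds.
split=> [j hj||]; first by apply: seq_of_rV_out; lia.
  move=> j hj; case: (lerP j (L - pp p + N%:Z - 1)) => hj2; first exact: hv.
  by rewrite -(bbl0 j); apply: eq_bbl => i hi1 hi2; apply: seq_of_rV_out; lia.
by exists N => j hj; apply: seq_of_rV_out; lia.
Qed.

Lemma FRplus_mxP v : (v <= FRplus_mx)%MS -> FRplus a p q R (seq_of_rV L v).
Proof.
move=> /sub_kermx_window hv; apply/FRplusP; have [? ?] := qq_bounds; have hR := window_end.
split=> [j hj||]; first by apply: seq_of_rV_out; lia.
  move=> j hj; case: (lerP (L - qq q) j) => hj2; first by apply: hv => //; lia.
  by rewrite -(bbl0 j); apply: eq_bbl => i hi1 hi2; apply: seq_of_rV_out; lia.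
by exists N => j hj; apply: seq_of_rV_out; lia.
Qed.

Lemma FLminus_sub_mx psi : FLminus a p q L psi -> (rV_of_seq L N psi <= FLminus_mx)%MS.
Proof.
move=> hF; have hK := Mfin_rV_of_seqK (FLminus_Mfin hF); case/FLminusP: hF => _ h2 _.
by apply/sub_kermx_window; rewrite hK => j hj _; apply: h2.
Qed.

Lemma FRplus_sub_mx psi : FRplus a p q R psi -> (rV_of_seq L N psi <= FRplus_mx)%MS.
Proof.
move=> hF; have hK := Mfin_rV_of_seqK (FRplus_Mfin hF); case/FRplusP: hF => _ h2 _.
by apply/sub_kermx_window; rewrite hK => j _ hj; apply: h2; have := window_end; lia.
Qed.

Definition extL (j : nat) := L - j%:Z.
Definition extR (j : nat) := R + j%:Z.
Definition extn (j : nat) := (j.*2 + N)%N.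

Lemma extn_end j : extL j + (extn j)%:Z - 1 = extR j.
Proof. by rewrite /extL /extR /extn /N; lia. Qed.

Lemma taun_le_extn j : (taun <= extn j)%N.
Proof. by move: hN; rewrite /extn; lia. Qed.

Definition extendable j m psi := exists z,
  Mfin a p q (extL (j + m)) (extR (j + m)) z /\ psi = Pfin (extL j) (extR j) z.

Definition restr_mx L1 n1 L2 n2 := window_mx id L1 n1 L2 n2.

Lemma mul_restr_mx L1 n1 L2 n2 (u : 'rV[F]_(n1 * d)) :
  u *m restr_mx L1 n1 L2 n2 = rV_of_seq L2 n2 (seq_of_rV L1 u).
Proof. exact: mul_window_mx. Qed.

(* The rows of [ext_mx j m] span the restrictions to [L - j, R + j] of the bulk solutions on
   [L - j - m, R + j + m]. *)
Definition ext_mx j m :=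
  sol_mx (extL (j + m)) (extn (j + m)) *m restr_mx (extL (j + m)) (extn (j + m)) (extL j) (extn j).

Lemma extendable_Mfin j m psi : extendable j m psi -> Mfin a p q (extL j) (extR j) psi.
Proof. by move=> [z [hz ->]]; apply: Mfin_Pfin hz _ _; rewrite /extL /extR; lia. Qed.

Lemma extendable_rV_of_seqK j m psi :
  extendable j m psi -> seq_of_rV (extL j) (rV_of_seq (extL j) (extn j) psi) = psi.
Proof. by move=> /extendable_Mfin /MfinP [hs _]; apply: rV_of_seqK_supp; rewrite extn_end. Qed.

Lemma ext_mxP j m (v : 'rV[F]_(extn j * d)) :
  (v <= ext_mx j m)%MS <-> extendable j m (seq_of_rV (extL j) v).
Proof.
have hsol v' := sol_mxP (extL (j + m)) v' (taun_le_extn (j + m)).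
rewrite extn_end in hsol.
split=> [/submxP [D ->]|[z [hz hv]]].
  exists (seq_of_rV (extL (j + m)) (D *m sol_mx (extL (j + m)) (extn (j + m)))).
  split; first by apply/hsol; apply: submxMl.
  rewrite mulmxA mul_restr_mx; apply: functional_extensionality => x.
  by rewrite rV_of_seqK /Pfin extn_end.
have hzK : seq_of_rV (extL (j + m)) (rV_of_seq (extL (j + m)) (extn (j + m)) z) = z.
  by case/MfinP: (hz) => hs _; apply: rV_of_seqK_supp; rewrite extn_end.
have -> : v = rV_of_seq (extL (j + m)) (extn (j + m)) z *m
              restr_mx (extL (j + m)) (extn (j + m)) (extL j) (extn j).
  rewrite mul_restr_mx hzK -[LHS](@seq_of_rVK (extL j) (extn j)) hv.
  by apply: eq_rV_of_seq => x h1 h2; rewrite /Pfin ifT //; apply/andP; split; rewrite -?extn_end.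
by apply: submxMr; apply/hsol; rewrite hzK.
Qed.

Lemma extendable_mono j m m' psi : (m <= m')%N -> extendable j m' psi -> extendable j m psi.
Proof.
move=> hmm [z [hz ->]]; exists (Pfin (extL (j + m)) (extR (j + m)) z); split.
  by apply: Mfin_Pfin hz _ _; rewrite /extL /extR; lia.
by rewrite Pfin_Pfin // /extL /extR; lia.
Qed.

Lemma extendable_step j m x : extendable j m.+1 x ->
  exists y, extendable j.+1 m y /\ Pfin (extL j) (extR j) y = x.
Proof.
move=> [z [hz ->]]; exists (Pfin (extL j.+1) (extR j.+1) z); split.
  by exists z; split=> //; rewrite addSn -addnS.
by rewrite Pfin_Pfin // /extL /extR; lia.
Qed.

(* Once [ext_mx j m0] has minimal rank, the decreasing spaces [ext_mx j m] are all equal. *)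
Lemma extendable_stable j m0 m psi : (forall m', \rank (ext_mx j m0) <= \rank (ext_mx j m'))%N ->
  (m0 <= m)%N -> extendable j m0 psi -> extendable j m psi.
Proof.
move=> hmin hm hpsi.
have hsub : (ext_mx j m <= ext_mx j m0)%MS.
  apply/row_subP => i; apply/ext_mxP; apply: (extendable_mono hm); apply/ext_mxP; exact: row_sub.
have [_ heq] := mxrank_leqif_eq hsub.
have /andP [_ hsub'] : (ext_mx j m == ext_mx j m0)%MS by rewrite -heq eqn_leq mxrankS // hmin.
have hv : (rV_of_seq (extL j) (extn j) psi <= ext_mx j m0)%MS.
  by apply/ext_mxP; rewrite (extendable_rV_of_seqK hpsi).
by move: (submx_trans hv hsub') => /ext_mxP; rewrite (extendable_rV_of_seqK hpsi).
Qed.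

Lemma glue_windows (s : nat -> dseq) :
  (forall j, Mfin a p q (extL j) (extR j) (s j)) ->
  (forall j, Pfin (extL j) (extR j) (s j.+1) = s j) ->
  exists phi, kerA phi /\ Pfin L R phi = s 0%N.
Proof.
move=> hM hs.
have hcons j n : Pfin (extL j) (extR j) (s (n + j)%N) = s j.
  elim: n => [|n IH]; first exact: (hM j).1.
  by rewrite -IH -[in RHS](hs (n + j)%N) Pfin_Pfin // /extL /extR; lia.
have hagree j j' i : extL j <= i -> i <= extR j -> extL j' <= i -> i <= extR j' -> s j i = s j' i.
  wlog hjj : j j' / (j <= j')%N => [H h1 h2 h3 h4|h1 h2 _ _].
    by case: (leqP j j') => hh; [exact: H | symmetry; apply: H => //; exact: ltnW].
  by rewrite -(hcons j (j' - j)%N) subnK // /Pfin ifT //; apply/andP.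
pose J (i : int) := (absz (i - L) + absz (i - R))%N.
pose phi : dseq := fun i => s (J i) i.
have hphi j i : extL j <= i -> i <= extR j -> phi i = s j i.
  by move=> h1 h2; apply: hagree => //; rewrite /extL /extR /J; lia.
have [? ?] := pp_bounds; have [? ?] := qq_bounds.
exists phi; split=> [x|].
  pose j := (absz (x - L) + absz (x - R) + absz (pp p) + absz (qq q))%N.
  have /MfinP [_ he] := hM j.
  rewrite -(he x); [|rewrite /extL /j; lia|rewrite /extR /j; lia].
  by apply: eq_bbl => i hi1 hi2; apply: hphi; rewrite /extL /extR /j; lia.
apply: functional_extensionality => i; rewrite -[s 0%N](hM 0%N).1 /Pfin /extL /extR subr0 addr0.
by case: ifP => // /andP [h1 h2]; apply: hphi; rewrite /extL /extR; lia.
Qed.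

(* A Mittag-Leffler argument: the restrictions to [L, R] of solutions on large windows
   stabilise, and the stable ones extend window by window to elements of [ker A]. *)
Lemma extendable_kerA : exists m0, forall x, extendable 0 m0 x -> PkerA a p q L R x.
Proof.
have [mj hmj] : exists mj : nat -> nat,
    forall j m, (\rank (ext_mx j (mj j)) <= \rank (ext_mx j m))%N.
  apply: (functional_choice (fun j m0 => forall m, (\rank (ext_mx j m0) <= \rank (ext_mx j m))%N)).
  by move=> j; apply: exists_argmin_nat.
exists (mj 0%N) => x hx.
have [|s [hs0 hs hsR]] := @dependent_choice_chain _ (fun j y => extendable j (mj j) y)
  (fun j y x => Pfin (extL j) (extR j) y = x) x _ hx.
  move=> j y hy; have hle : (mj j <= (mj j + mj j.+1).+1)%N by lia.
  have [z [hz hzy]] := extendable_step (extendable_stable (hmj j) hle hy).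
  by exists z; split=> //; apply: extendable_mono hz; apply: leq_addl.
have [phi [hphi hres]] := glue_windows (fun j => extendable_Mfin (hs j)) hsR.
by exists phi; rewrite hres hs0.
Qed.

Lemma PkerA_extendable m x : PkerA a p q L R x -> extendable 0 m x.
Proof.
move=> [phi [hphi ->]]; exists (Pfin (extL m) (extR m) phi); split; first exact: Pfin_Mfin.
by rewrite Pfin_Pfin /extL /extR ?subr0 ?addr0 //; lia.
Qed.

Lemma extL0 : extL 0 = L.
Proof. by rewrite /extL subr0. Qed.

Definition fold_left m (psi : dseq) : dseq := fun i => if i - m%:Z < L then psi (i - m%:Z) else 0.
Definition fold_right m (psi : dseq) : dseq := fun i => if R < i + m%:Z then psi (i + m%:Z) else 0.
Definition fold m (psi : dseq) : dseq := fun i => fold_left m psi i + fold_right m psi i.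

Lemma fold_linear m : seq_linear (fold m).
Proof.
move=> c psi phi; apply: functional_extensionality => i; rewrite /fold /fold_left /fold_right.
by case: ifP => _; case: ifP => _; rewrite ?scalerDr ?scaler0 ?addr0 ?add0r // addrACA.
Qed.

Section Fold.
Variables (m : nat) (psi : dseq).
Hypothesis hM : Mfin a p q (extL m) (extR m) psi.
Hypothesis hmid : forall i, L <= i -> i <= R -> psi i = 0.

Lemma fold_left_FLminus : FLminus a p q L (fold_left m psi).
Proof.
case/MfinP: hM => hs he; have [? ?] := pp_bounds; have [? ?] := qq_bounds; have ht := taunE.
apply/FLminusP; split=> [i hi||]; last by exists m => i hi; rewrite /fold_left ifF //; lia.
  by rewrite /fold_left ifT ?hs //; rewrite /extL; lia.
move=> j hj; case: (lerP (j - m%:Z + qq q) R) => hjR.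
  rewrite -(he (j - m%:Z)); [|rewrite /extL; lia|rewrite /extR; lia].
  rewrite -bbl_shiftz; apply: eq_bbl => i hi1 hi2; rewrite /fold_left /shiftz.
  by case: ifP => // /negbT; rewrite -leNgt => hi; rewrite hmid //; lia.
rewrite -(bbl0 j); apply: eq_bbl => i hi1 hi2; rewrite /fold_left ifF //.
by move: hN; rewrite /N; lia.
Qed.

Lemma fold_right_FRplus : FRplus a p q R (fold_right m psi).
Proof.
case/MfinP: hM => hs he; have [? ?] := pp_bounds; have [? ?] := qq_bounds; have ht := taunE.
apply/FRplusP; split=> [i hi||]; last by exists m => i hi; rewrite /fold_right ifF //; lia.
  by rewrite /fold_right ifT ?hs //; rewrite /extR; lia.
move=> j hj; case: (lerP L (j + m%:Z + pp p)) => hjL.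
  rewrite -(he (j + m%:Z)); [|rewrite /extL; lia|rewrite /extR; lia].
  rewrite -bbl_shiftz; apply: eq_bbl => i hi1 hi2; rewrite /fold_right /shiftz.
  by case: ifP => // /negbT; rewrite -leNgt => hi; rewrite hmid //; lia.
rewrite -(bbl0 j); apply: eq_bbl => i hi1 hi2; rewrite /fold_right ifF //.
by move: hN; rewrite /N; lia.
Qed.

Lemma fold_eq0 : (forall i, L <= i -> i <= R -> fold m psi i = 0) -> forall i, psi i = 0.
Proof.
move=> hf; have hl := fold_left_FLminus; have hr := fold_right_FRplus.
have /MfinP [hls _] := FLminus_Mfin hl; have /MfinP [hrs _] := FRplus_Mfin hr.
have h0 : PkerA a p q L R (fun _ => 0).
  exists (fun _ => 0); split; first exact: bbl0.
  by apply: functional_extensionality => j; rewrite /Pfin; case: ifP.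
have hsum j : 0 + fold_left m psi j + fold_right m psi j = 0.
  rewrite add0r; case hj : ((L <= j) && (j <= R)); first by case/andP: hj; apply: hf.
  by rewrite hls ?hrs ?hj ?addr0.
have [_ hl0 hr0] := summands_indep h0 hl hr hsum.
move=> i; case: (ltrP i L) => hi; first by have := hl0 (i + m%:Z); rewrite /fold_left addrK ifT.
case: (lerP i R) => hi2; first exact: hmid.
by have := hr0 (i - m%:Z); rewrite /fold_right subrK ifT.
Qed.

End Fold.

Definition fold_mx m := window_mx (fold m) (extL m) (extn m) L N.

Lemma fold_mx_injective m (z : 'rV[F]_(extn m * d)) :
  (z <= sol_mx (extL m) (extn m))%MS -> z *m restr_mx (extL m) (extn m) L N = 0 ->
  (z *m fold_mx m <= FLminus_mx + FRplus_mx)%MS /\ (z *m fold_mx m = 0 -> z = 0).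
Proof.
set psi := seq_of_rV (extL m) z => hz hres.
have hM : Mfin a p q (extL m) (extR m) psi by move: hz; rewrite sol_mxP ?taun_le_extn // extn_end.
have hmid i : L <= i -> i <= R -> psi i = 0.
  by move: hres; rewrite mul_restr_mx => /rV_of_seq_eq0P h h1 h2; apply: h; have := window_end; lia.
rewrite mul_window_mx; last exact: fold_linear.
split=> [|/rV_of_seq_eq0P hf0].
  rewrite rV_of_seqD addmx_sub_adds //.
    exact/FLminus_sub_mx/fold_left_FLminus.
  exact/FRplus_sub_mx/fold_right_FRplus.
have psi0 : forall i, psi i = 0.
  by apply: (fold_eq0 hM hmid) => i h1 h2; apply: hf0; rewrite -?window_end.
by rewrite -(seq_of_rVK (extL m) z) -/psi; apply/rV_of_seq_eq0P => i _ _.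
Qed.

Section Stable.
Variable m0 : nat.
Hypothesis hm0 : forall x, extendable 0 m0 x -> PkerA a p q L R x.

Lemma ext_mx_PkerA v : (v <= ext_mx 0 m0)%MS <-> PkerA a p q L R (seq_of_rV L v).
Proof.
rewrite ext_mxP extL0; split=> [/hm0 //|].
by apply: PkerA_extendable.
Qed.

(* Solutions on [L - m0, R + m0] either restrict to the stable image in [P ker A], or vanish
   on [L, R] and then fold injectively into [F_L^- + F_R^+]. *)
Lemma rank_sol_le : (taun * d <= \rank (ext_mx 0 m0) + \rank (FLminus_mx + FRplus_mx))%N.
Proof.
set K := sol_mx (extL m0) (extn m0); set Res := restr_mx (extL m0) (extn m0) L N.
set Z := (K :&: kermx Res)%MS.
have hZ (z : 'rV_(extn m0 * d)) : (z <= Z)%MS -> (z <= K)%MS /\ z *m Res = 0.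
  by rewrite sub_capmx sub_kermx => /andP[-> /eqP].
have hZF : (Z :&: kermx (fold_mx m0))%MS = 0.
  apply/eqP; rewrite -submx0; apply/row_subP => i.
  have := row_sub i (Z :&: kermx (fold_mx m0))%MS; rewrite sub_capmx => /andP [hz /sub_kermxP hf].
  by case: (hZ _ hz) => hK hR; have [_ ->] := fold_mx_injective hK hR; rewrite ?sub0mx.
have hZs : (Z *m fold_mx m0 <= FLminus_mx + FRplus_mx)%MS.
  apply/row_subP => i; rewrite row_mul; case: (hZ _ (row_sub i Z)) => hK hR.
  by case: (fold_mx_injective hK hR).
rewrite -(rank_sol_mx (extL m0) (taun_le_extn m0)) -/K -(mxrank_mul_ker K Res) -/Z.
have hZr : \rank (Z *m fold_mx m0) = \rank Z by apply/mxrank_injP; rewrite hZF.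
rewrite -hZr leq_add ?mxrankS //.
by rewrite /ext_mx extL0.
Qed.

Lemma sol_mx_span : (sol_mx L N <= ext_mx 0 m0 + (FLminus_mx + FRplus_mx))%MS.
Proof.
have htN : (taun <= N)%N by move: hN; lia.
have hsub : (ext_mx 0 m0 + (FLminus_mx + FRplus_mx) <= sol_mx L N)%MS.
  rewrite !addsmx_sub; apply/and3P; split; apply/row_subP => i; apply/(sol_mxP _ _ htN).
  - rewrite -window_end; have [phi [hphi ->]] := (ext_mx_PkerA _).1 (row_sub i _).
    exact: Pfin_Mfin.
  - by rewrite -window_end; exact: FLminus_Mfin (FLminus_mxP (row_sub i _)).
  - by rewrite -window_end; exact: FRplus_Mfin (FRplus_mxP (row_sub i _)).
have hdisj : (ext_mx 0 m0 :&: (FLminus_mx + FRplus_mx))%MS = 0.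
  apply/eqP; rewrite -submx0; apply/row_subP => i.
  have := row_sub i (ext_mx 0 m0 :&: (FLminus_mx + FRplus_mx))%MS.
  rewrite sub_capmx => /andP [hxU /sub_addsmxP [[D1 D2] /= hx]]; set x := row i _ in hxU hx *.
  have hx0 : seq_of_rV L (x + - D1 *m FLminus_mx + - D2 *m FRplus_mx) = fun _ => 0.
    by rewrite hx !mulNmx addrAC addrK subrr seq_of_rV0.
  rewrite !seq_of_rVD funeq0P in hx0.
  have [h0 _ _] := summands_indep ((ext_mx_PkerA x).1 hxU) (FLminus_mxP (submxMl (- D1) FLminus_mx))
    (FRplus_mxP (submxMl (- D2) FRplus_mx)) hx0.
  by rewrite submx0 -(seq_of_rVK L x); apply/eqP/rV_of_seq_eq0P => j _ _; apply: h0.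
have hr : (\rank (sol_mx L N) <= \rank (ext_mx 0 m0 + (FLminus_mx + FRplus_mx)))%N.
  by rewrite mxrank_disjoint_sum // rank_sol_mx //; apply: rank_sol_le.
have [_ heq] := mxrank_leqif_eq hsub.
have /andP [_ //] : (ext_mx 0 m0 + (FLminus_mx + FRplus_mx) == sol_mx L N)%MS.
by rewrite -heq eqn_leq mxrankS.
Qed.

End Stable.

Lemma Mfin_decompose psi : Mfin a p q L R psi ->
  exists u v w, [/\ PkerA a p q L R u, FLminus a p q L v, FRplus a p q R w &
                    psi = (fun j => u j + v j + w j)].
Proof.
move=> hpsi; have [m0 hm0] := extendable_kerA.
have hv : (rV_of_seq L N psi <= sol_mx L N)%MS.
  by apply/sol_mxP; [move: hN; lia | rewrite Mfin_rV_of_seqK // -window_end].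
case/sub_addsmxP: (submx_trans hv (sol_mx_span hm0)) => [[D1 D2] /= hD].
case/sub_addsmxP: (submxMl D2 (FLminus_mx + FRplus_mx)%MS) => [[E1 E2] /= hE].
exists (seq_of_rV L (D1 *m ext_mx 0 m0)), (seq_of_rV L (E1 *m FLminus_mx)),
  (seq_of_rV L (E2 *m FRplus_mx)); split.
- exact: (ext_mx_PkerA hm0 _).1 (submxMl _ _).
- exact: FLminus_mxP (submxMl _ _).
- exact: FRplus_mxP (submxMl _ _).
by rewrite -(Mfin_rV_of_seqK hpsi) hD hE addrA !seq_of_rVD.
Qed.

End Window.
End KernelDim.
End Regular.
End Operator.

Theorem mainTheorem11 (F : numClosedFieldType) (d : nat) (hd : (0 < d)%N)
    (p q : int) (a : int -> 'M[F]_d)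
    (hpq : p <= q) (hap : a p != 0) (haq : a q != 0)
    (hreg : regular a p q)
    (k : nat) (hk : has_dim (kerA a p q) k)
    (L R : int) (hLR : L <= R)
    (hN : R - L + 1 >= 2 * ((d%:Z) * tau p q - k%:Z) + tau p q) :
  direct_sum3 (Mfin a p q L R) (PkerA a p q L R) (FLminus a p q L) (FRplus a p q R).
Proof.
have hN' : ((sigma d p q k).*2 + taun p q <= absz (R - L + 1)%R)%N.
  have ht : (taun p q : int) = tau p q by rewrite taunE.
  have htd : ((taun p q * d)%N : int) = d%:Z * tau p q by rewrite PoszM ht mulrC.
  by have := kerA_dim_le hpq hreg hk; rewrite /sigma; lia.
split=> [psi|u v w hu hv hw /funeq0P h0].
  split=> [hM|[u [v [w [hu hv hw ->]]]]]; first exact: (Mfin_decompose hpq hreg hk hLR hN' hM).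
  have hu' : Mfin a p q L R u by case: hu => phi [hphi ->]; apply: Pfin_Mfin.
  have hv' := FLminus_Mfin hpq hreg hk hLR hN' hv; have hw' := FRplus_Mfin hpq hreg hk hLR hN' hw.
  exact: (Mfin_add (Mfin_add hu' hv') hw').
have [h1 h2 h3] := summands_indep hpq hreg hk hLR hN' hu hv hw h0.
by split; apply/funeq0P.
Qed.
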